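(* Let $R$ (red) and $B$ (blue) be finite sets of points in the plane with $S=B\cup R$ in general position, $r=|R|$ and $|B|=r+2\delta$ for an integer $\delta\ge 0$. Let $k\ge 0$ be an integer. (i) In an $R^k$-rotation, every transition $\delta\rightsquigarrow\delta+1$ or $\delta+1\rightsquigarrow\delta$ of $\omega(R^k_t)$, occurring at angle $t_0$, occurs through a balanced line, i.e. the line $R^k_{t_0}$ is a balanced line. (ii) In a $B^k$-rotation, every transition $\delta\rightsquigarrow\delta-1$ or $\delta-1\rightsquigarrow\delta$ of $\omega(B^k_t)$, occurring at angle $t_0$, occurs through a balanced line, i.e. the line $B^k_{t_0}$ is a balanced line.
   Context: General position means no three points of $S$ are collinear. Coordinates are chosen so that all points of $S$ have distinct abscissae. Each blue point has weight $\omega(p)=+1$ and each red point has weight $\omega(q)=-1$. For an open halfplane $H$, $\omega(H)=\sum_{s\in S\cap H}\omega(s)$. For a directed line $\ell$, $\ell^+$ and $\ell^-$ denote the open halfplanes to the right and to the left of $\ell$, and $\omega(\ell):=\omega(\ell^+)$. A line determined by two points of $S$ is balanced if both open halfplanes it bounds have weight $\delta$. For $P\subseteq S$ and an integer $k$, a $P^k$-rotation is a family of directed lines $P^k_t$, $t\in[0,2\pi]$, where $t$ is the angle of the direction of the line measured from the vertical axis, such that $P^k_0$ contains exactly one point of $P$, and as $t$ increases the line rotates counterclockwise so that (i) $|P\cap P^k_t|=1$ except for finitely many values of $t$ at which $|P\cap P^k_t|=2$, and (ii) whenever $|P\cap P^k_t|=1$, exactly $k$ points of $P$ lie to the right of $P^k_t$.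 The point of $P$ on the line (the pivot) changes exactly when the line contains two points of $P$; $P^k_0=P^k_{2\pi}$. A transition $a\rightsquigarrow a'$ of $\omega(P^k_t)$ at angle $t_0$ means that $\omega(P^k_t)=a$ for all $t<t_0$ sufficiently close to $t_0$ and $\omega(P^k_t)=a'$ for all $t>t_0$ sufficiently close to $t_0$ (angles taken cyclically). *)

From HB Require Import structures.
From mathcomp Require Import all_boot all_order all_algebra.
From mathcomp Require Import all_classical all_reals all_analysis.
Set Implicit Arguments. Unset Strict Implicit. Unset Printing Implicit Defensive.
Import Order.TTheory GRing.Theory Num.Theory numFieldNormedType.Exports.
Local Open Scope ring_scope.
Local Open Scope classical_set_scope.

Section Geom.
Variable R : realType.
Notation pt := (R * R)%type.

(* A directed line at angle t (angle of its direction measured from the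
   vertical axis, counterclockwise): direction (-sin t, cos t).  Its right
   unit normal is (cos t, sin t); the line with offset c is
   { x | cos t * x.1 + sin t * x.2 = c }. *)
Definition lval (t : R) (x : pt) : R := cos t * x.1 + sin t * x.2.
Definition on_line (t c : R) : pred pt := fun x => lval t x == c.
Definition right_of (t c : R) : pred pt := fun x => c < lval t x.
Definition left_of (t c : R) : pred pt := fun x => lval t x < c.

Definition weight (Blue Red : seq pt) (H : pred pt) : int :=
  (count H Blue)%:Z - (count H Red)%:Z.

Definition general_position (S : seq pt) : Prop :=
  forall p q s, p \in S -> q \in S -> s \in S ->
    p != q -> q != s -> p != s ->
    (q.1 - p.1) * (s.2 - p.2) - (q.2 - p.2) * (s.1 - p.1) != 0.

Definition distinct_abscissae (S : seq pt) : Prop :=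
  forall p q, p \in S -> q \in S -> p != q -> p.1 != q.1.

(* A P^k-rotation, described by the offset h t of the line P^k_t at angle t
   (line = on_line t (h t)), extended 2pi-periodically to all angles;
   the line moves continuously. *)
Definition is_rotation (P : seq pt) (k : nat) (h : R -> R) : Prop :=
  [/\ (forall t, h (t + 2 * pi) = h t),
      continuous h,
      count (on_line 0 (h 0)) P = 1%N &
      [/\
      (forall t, count (on_line t (h t)) P = 1%N \/
                 count (on_line t (h t)) P = 2%N),

      finite_set [set t | 0 <= t <= 2 * pi /\ count (on_line t (h t)) P = 2%N] &
      (forall t, count (on_line t (h t)) P = 1%N ->
                 count (right_of t (h t)) P = k)]].

Definition transition (f : R -> int) (t0 : R) (a a' : int) : Prop :=
  exists2 e : R, 0 < e &
    (forall t, t0 - e < t < t0 -> f t = a) /\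
    (forall t, t0 < t < t0 + e -> f t = a').

Definition balanced (Blue Red : seq pt) (delta : int) (t c : R) : Prop :=
  [/\ exists p q, [/\ p \in Blue ++ Red, q \in Blue ++ Red, p != q,
                      on_line t c p & on_line t c q],
      weight Blue Red (right_of t c) = delta &
      weight Blue Red (left_of t c) = delta].

End Geom.

From HB Require Import structures.
From mathcomp Require Import all_boot all_order all_algebra.
From mathcomp Require Import all_classical all_reals all_analysis.
From mathcomp Require Import zify ring lra.
Import Order.TTheory GRing.Theory Num.Theory numFieldNormedType.Exports.
Set Implicit Arguments. Unset Strict Implicit. Unset Printing Implicit Defensive.
Local Open Scope ring_scope.

(* Away from the finitely many angles at which the line P^k_t passes through two
   pivots, exactly k points of P lie to its right, so the weight of the right
   halfplane is a function of the number of points of the other colour Q to its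
   right.  Points of Q off the line P^k_{t0} keep their side for nearby angles, so
   a jump of the weight at t0 forces a point of Q onto that line; as the line also
   carries a pivot, general position leaves exactly one point of each colour on
   it.  The values on both sides of the jump then force the weight of the right
   halfplane at t0 to be delta, and counting points gives delta on the left too. *)

Lemma periodicz (U V : zmodType) (f : U -> V) (T : U) :
  periodic f T -> forall (n : int) a, f (a + T *~ n) = f a.
Proof.
move=> fT [] n a; first exact: periodicn.
by rewrite NegzE mulrNz -[in RHS](subrK (T *+ n.+1) a) periodicn.
Qed.

Section Rotation.
Variable R : realType.
Notation pt := (R * R)%type.
Implicit Types (P Q S : seq pt) (t c : R) (x : pt).

Lemma lval_periodic x : periodic (fun t => lval t x) (pi *+ 2).
Proof. by move=> t; rewrite /lval cosD2pi sinD2pi. Qed.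

Lemma finite_set_avoid (A : set R) (l r : R) : finite_set A -> l < r ->
  exists2 t, l < t < r & ~ A t.
Proof.
move=> finA lr; apply: contrapT => noavoid.
have inA n : A (l + (r - l) / n.+2%:R).
  apply: contrapT => nA; apply: noavoid; exists (l + (r - l) / n.+2%:R) => //.
  have : 0 < (r - l) / n.+2%:R < r - l.
    by rewrite divr_gt0 ?subr_gt0 //= ltr_pdivrMr // ltr_pMr ?subr_gt0 // ltr1n.
  by move: ((r - l) / _) => q /andP[? ?]; apply/andP; split; lra.
move: finA; rewrite finite_setPn; apply; apply/pcard_leP/injfunPex.
exists (fun n => l + (r - l) / n.+2%:R) => [n _ | m n _ _ /addrI] //=.
have rl0 : r - l != 0 by rewrite subr_eq0 gt_eqF.
by move=> /(mulfI rl0)/invr_inj/eqP; rewrite eqr_nat => /eqP[].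
Qed.

Lemma is_rotation_generic P k h (a b : R) : is_rotation P k h -> a < b ->
  exists2 t, a < t < b & count (on_line t (h t)) P = 1%N.
Proof.
move=> [hper _ _ [h12 hfin _]] ab.
have pi2 : 0 < pi *+ 2 :> R by rewrite mulrn_wgt0 // pi_gt0.
have h_periodic : periodic h (pi *+ 2) by move=> t; rewrite -mulr_natl hper.
set m := Num.floor (a / (pi *+ 2)); pose u : R := (pi *+ 2) *~ m.
have [au0 au1] : 0 <= a - u /\ a - u < pi *+ 2.
  have /andP[] := floor_itv (a / (pi *+ 2)).
  rewrite -/m ler_pdivlMr // ltr_pdivrMr // intrD mulrDl mul1r /u -mulrzr mulrC.
  by split; lra.
have [|t' /andP[t'l t'u] bad] := @finite_set_avoid _ (a - u) (Num.min (b - u) (pi *+ 2)) hfin.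
  by rewrite lt_min; apply/andP; split; lra.
exists (t' + u); first by move: t'u; rewrite lt_min => /andP[? ?]; apply/andP; split; lra.
rewrite /u (periodicz h_periodic).
under eq_count => x do rewrite /on_line (periodicz (lval_periodic x)).
case: (h12 t') => // on2; exfalso; apply: bad.
by move: t'u; rewrite lt_min => /andP[? ?]; split; first (apply/andP; split; lra).
Qed.

Lemma on_line_collinear t c (p q s : pt) :
  on_line t c p -> on_line t c q -> on_line t c s ->
  (q.1 - p.1) * (s.2 - p.2) - (q.2 - p.2) * (s.1 - p.1) = 0.
Proof.
rewrite /on_line /lval => /eqP Hp /eqP Hq /eqP Hs.
have Eq : cos t * (q.1 - p.1) + sin t * (q.2 - p.2) = 0.
  by rewrite !mulrBr addrACA -opprD Hq Hp subrr.
have Es : cos t * (s.1 - p.1) + sin t * (s.2 - p.2) = 0.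
  by rewrite !mulrBr addrACA -opprD Hs Hp subrr.
rewrite -[LHS]mul1r -(cos2Dsin2 t).
(* the determinant, scaled by cos^2 + sin^2, is a combination of Eq and Es *)
have -> : (cos t ^+ 2 + sin t ^+ 2) *
    ((q.1 - p.1) * (s.2 - p.2) - (q.2 - p.2) * (s.1 - p.1)) =
  cos t * ((s.2 - p.2) * (cos t * (q.1 - p.1) + sin t * (q.2 - p.2))
           - (q.2 - p.2) * (cos t * (s.1 - p.1) + sin t * (s.2 - p.2)))
  + sin t * ((q.1 - p.1) * (cos t * (s.1 - p.1) + sin t * (s.2 - p.2))
           - (s.1 - p.1) * (cos t * (q.1 - p.1) + sin t * (q.2 - p.2))) by ring.
by rewrite Eq Es !(mulr0, subrr, addr0).
Qed.

Lemma general_position_sub S S' :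
  {subset S' <= S} -> general_position S -> general_position S'.
Proof. by move=> sub gp p q s pS qS sS; apply: gp; apply: sub. Qed.

Lemma count_on_line_le2 S t c :
  uniq S -> general_position S -> (count (on_line t c) S <= 2)%N.
Proof.
move=> uS gp; rewrite leqNgt -size_filter; apply/negP.
have := filter_uniq (on_line t c) uS.
have mem_on x : x \in [seq y <- S | on_line t c y] -> x \in S /\ on_line t c x.
  by rewrite mem_filter => /andP[].
case: [seq y <- S | on_line t c y] mem_on => [|p [|q [|s l]]] // mem_on.
rewrite /= !inE !negb_or -!andbA => /and5P[pq ps _ qs _] _.
have [pS onp] := mem_on p (mem_head _ _).
have [qS onq] : q \in S /\ on_line t c q by apply: mem_on; rewrite !inE eqxx orbT.
have [sS ons] : s \in S /\ on_line t c s by apply: mem_on; rewrite !inE eqxx !orbT.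
by move: (gp p q s pS qS sS pq qs ps); rewrite (on_line_collinear onp onq ons) eqxx.
Qed.

Lemma count_right_on_left S t c :
  (count (right_of t c) S + count (on_line t c) S + count (left_of t c) S)%N = size S.
Proof.
elim: S => //= x S IH; rewrite /right_of /on_line /left_of /= in IH *.
by case: (ltgtP (lval t x) c) => /= _; lia.
Qed.

Lemma count_right_off_line Q t0 c0 t c :
  {in Q, forall x, ~~ on_line t0 c0 x -> right_of t c x = right_of t0 c0 x} ->
  count (right_of t c) Q =
    (count (right_of t0 c0) Q + count (predI (on_line t0 c0) (right_of t c)) Q)%N.
Proof.
elim: Q => //= x Q IH side; rewrite IH => [|y yQ]; last by apply: side; rewrite inE yQ orbT.
case onx: (on_line t0 c0 x) => /=.
  have -> : right_of t0 c0 x = false.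
    by move: onx; rewrite /on_line /right_of => /eqP ->; rewrite ltxx.
  by case: (right_of t c x); lia.
by rewrite side ?mem_head ?onx //; case: (right_of t0 c0 x); lia.
Qed.

Lemma right_of_near (h : R -> R) t0 x : continuous h ->
  \forall t \near t0, ~~ on_line t0 (h t0) x -> right_of t (h t) x = right_of t0 (h t0) x.
Proof.
move=> hc.
have cvg_gap : ((fun t => lval t x - h t) @ t0 --> lval t0 x - h t0)%classic.
  apply: cvgB; last exact: hc.
  by apply: cvgD; apply: cvgMl; [exact: continuous_cos | exact: continuous_sin].
rewrite /on_line /right_of /=.
case: (ltgtP (lval t0 x) (h t0)) => x0; last by near=> t.
- near=> t => _; suff : lval t x - h t < 0 by rewrite subr_lt0 => /ltW; rewrite leNgt => /negbTE.
  by near: t; apply: (cvgr_lt _ cvg_gap); rewrite subr_lt0.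
- near=> t => _; suff : 0 < lval t x - h t by rewrite subr_gt0.
  by near: t; apply: (cvgr_gt _ cvg_gap); rewrite subr_gt0.
Unshelve. all: by end_near.
Qed.

Lemma right_of_near_seq (h : R -> R) t0 Q : continuous h ->
  \forall t \near t0,
    {in Q, forall x, ~~ on_line t0 (h t0) x -> right_of t (h t) x = right_of t0 (h t0) x}.
Proof.
move=> hc; elim: Q => [|y Q IH]; first by near=> t.
near=> t => x; rewrite inE => /orP[/eqP ->|xQ].
  by near: t; exact: right_of_near.
by move: x xQ; near: t.
Unshelve. all: by end_near.
Qed.

Lemma rotation_transition_line P Q k h t0 (f : R -> int) (F : nat -> int) a a' :
  uniq (P ++ Q) -> general_position (P ++ Q) -> is_rotation P k h ->
  (forall t, count (on_line t (h t)) P = 1%N -> f t = F (count (right_of t (h t)) Q)) ->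
  transition f t0 a a' -> a != a' ->
  [/\ count (on_line t0 (h t0)) P = 1%N, count (on_line t0 (h t0)) Q = 1%N,
      count (right_of t0 (h t0)) P = k &
      [/\ a = F (count (right_of t0 (h t0)) Q) \/ a = F (count (right_of t0 (h t0)) Q).+1 &
          a' = F (count (right_of t0 (h t0)) Q) \/ a' = F (count (right_of t0 (h t0)) Q).+1]].
Proof.
move=> uPQ gp rot fF [e e0 [f_left f_right]] aa'.
have [_ hc _ [h12 _ hk]] := rot.
set c0 := h t0; set n := count (right_of t0 c0) Q.
have [e1 e10 side] := (nbhs_ballP _ _).1 (right_of_near_seq t0 Q hc).
pose eta := Num.min e e1.
have eta0 : 0 < eta by rewrite lt_min e0.
have [etae etae1] : eta <= e /\ eta <= e1 by split; rewrite ge_min lexx ?orbT.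
pose on_right t := count (predI (on_line t0 c0) (right_of t (h t))) Q.
have f_near t : t0 - eta < t < t0 + eta -> count (on_line t (h t)) P = 1%N ->
    f t = F (n + on_right t).
  move=> tI generic; rewrite fF // (count_right_off_line (side t _)) //.
  by rewrite /ball /= ltr_distlC; move: tI => /andP[? ?]; apply/andP; split; lra.
have on_right_le t : (on_right t <= count (on_line t0 c0) Q)%N.
  by apply: sub_count => x /andP[].
have [|t1 /andP[? ?] gen1] := is_rotation_generic (a := t0 - eta) (b := t0) rot; first lra.
have [|t2 /andP[? ?] gen2] := is_rotation_generic (a := t0) (b := t0 + eta) rot; first lra.
have Ea : a = F (n + on_right t1).
  by rewrite -(f_left t1) ?f_near //; apply/andP; split; lra.
have Ea' : a' = F (n + on_right t2).
  by rewrite -(f_right t2) ?f_near //; apply/andP; split; lra.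
have onQ : (0 < count (on_line t0 c0) Q)%N.
  rewrite lt0n; apply: contraNneq aa' => onQ0.
  by move: (on_right_le t1) (on_right_le t2); rewrite Ea Ea' onQ0 !leqn0 => /eqP-> /eqP->.
have onP : (0 < count (on_line t0 c0) P)%N by case: (h12 t0) => ->.
have := count_on_line_le2 t0 c0 uPQ gp; rewrite count_cat => le2.
have onQ1 : count (on_line t0 c0) Q = 1%N by lia.
have F01 o : (o <= 1)%N -> F (n + o) = F n \/ F (n + o) = F n.+1.
  by case: o => [|[|]] // _; [left | right]; congr F; lia.
have onP1 : count (on_line t0 c0) P = 1%N by lia.
split => //; first exact: hk.
by rewrite Ea Ea'; split; apply: F01; rewrite -onQ1.
Qed.

Lemma weight_left_of (Blue Red : seq pt) t c :
  weight Blue Red (left_of t c) = (size Blue)%:Z - (size Red)%:Z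
    - weight Blue Red (right_of t c) - weight Blue Red (on_line t c).
Proof.
rewrite /weight -(count_right_on_left Blue t c) -(count_right_on_left Red t c).
by rewrite !PoszD; ring.
Qed.

Lemma balanced_line (Blue Red : seq pt) (delta : nat) t c :
  ~~ has (mem Red) Blue -> size Blue = (size Red + 2 * delta)%N ->
  count (on_line t c) Blue = 1%N -> count (on_line t c) Red = 1%N ->
  weight Blue Red (right_of t c) = delta%:Z -> balanced Blue Red delta%:Z t c.
Proof.
move=> disj sz onB onR wr; split => //.
  have /hasP[p pB onp] : has (on_line t c) Blue by rewrite has_count onB.
  have /hasP[q qR onq] : has (on_line t c) Red by rewrite has_count onR.
  exists p, q; split; rewrite ?mem_cat ?pB ?qR ?orbT //.
  by apply: contraNneq disj => pq; apply/hasP; exists p; rewrite // pq.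
by rewrite weight_left_of wr /weight onB onR sz; lia.
Qed.

End Rotation.

Theorem lemma1 (R : realType) (Blue Red : seq (R * R)) (delta k : nat) :
  uniq Blue -> uniq Red -> ~~ has (mem Red) Blue ->
  general_position (Blue ++ Red) -> distinct_abscissae (Blue ++ Red) ->
  size Blue = (size Red + 2 * delta)%N ->
  (forall h : R -> R, is_rotation Red k h -> forall t0 : R,
     (transition (fun t => weight Blue Red (right_of t (h t))) t0
                 delta%:Z (delta%:Z + 1) \/
      transition (fun t => weight Blue Red (right_of t (h t))) t0
                 (delta%:Z + 1) delta%:Z) ->
     balanced Blue Red delta%:Z t0 (h t0)) /\
  (forall h : R -> R, is_rotation Blue k h -> forall t0 : R,
     (transition (fun t => weight Blue Red (right_of t (h t))) t0
                 delta%:Z (delta%:Z - 1) \/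
      transition (fun t => weight Blue Red (right_of t (h t))) t0
                 (delta%:Z - 1) delta%:Z) ->
     balanced Blue Red delta%:Z t0 (h t0)).
Proof.
move=> uB uR disj gp _ sz.
have uBR : uniq (Blue ++ Red) by rewrite cat_uniq uB uR has_sym disj.
have uRB : uniq (Red ++ Blue) by rewrite cat_uniq uB uR disj.
have gpRB : general_position (Red ++ Blue).
  by apply: general_position_sub gp => x; rewrite !mem_cat orbC.
split=> h rot t0 trans; have [_ _ _ [_ _ hk]] := rot.
- have fF t : count (on_line t (h t)) Red = 1%N ->
      weight Blue Red (right_of t (h t)) = (count (right_of t (h t)) Blue)%:Z - k%:Z.
    by move=> gen; rewrite /weight hk.
  have line a a' := rotation_transition_line (t0 := t0) (a := a) (a' := a')
    (F := fun n => n%:Z - k%:Z) uRB gpRB rot fF.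
  have [d01 d10] : delta%:Z != delta%:Z + 1 /\ delta%:Z + 1 != delta%:Z by split; lia.
  case: trans => [/line/(_ d01) | /line/(_ d10)]
    [onR onB rightR [/= Ea Ea']]; apply: balanced_line => //; rewrite /weight rightR; lia.
- have fF t : count (on_line t (h t)) Blue = 1%N ->
      weight Blue Red (right_of t (h t)) = k%:Z - (count (right_of t (h t)) Red)%:Z.
    by move=> gen; rewrite /weight hk.
  have line a a' := rotation_transition_line (t0 := t0) (a := a) (a' := a')
    (F := fun n => k%:Z - n%:Z) uBR gp rot fF.
  have [d01 d10] : delta%:Z != delta%:Z - 1 /\ delta%:Z - 1 != delta%:Z by split; lia.
  case: trans => [/line/(_ d01) | /line/(_ d10)]
    [onB onR rightB [/= Ea Ea']]; apply: balanced_line => //; rewrite /weight rightB; lia.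
Qed.
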